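(* Let $k\ge 0$ be an integer, put $K=k+6$ and $M=\dfrac{K}{\gcd(K,60)}$. For all integers $a_0,a_1,a_2$ with $a_0+a_1+a_2=k+3$ (equivalently, for every integral $G_2^{(1)}$-weight of level $k+2$, written in $A_2$ labels as explained in the context), $$D(a_1,a_2)\equiv D(a_0,a_1)\equiv D(a_2,a_0)\pmod M .$$ Equivalently, $\dim_{G_2}(b')\equiv\dim_{G_2}(Jb')\equiv\dim_{G_2}(J^2b')\pmod M$ for every integral level-$(k+2)$ $G_2^{(1)}$-weight $b'$.
   Context: For integers $a_1,a_2$ define $$D(a_1,a_2)=\frac{1}{120}(a_2-a_1)(a_2+1)(2a_2+a_1+3)(a_2+a_1+2)(a_2+2a_1+3)(a_1+1),$$ which is always an integer (it is the formal $G_2$ Weyl dimension). Integral $G_2^{(1)}$-weights of level $k+2$ are triples $(c_0;c_1,c_2)$ of integers (not necessarily nonnegative) with $c_0+2c_1+c_2=k+2$, with formal Weyl dimension $\dim_{G_2}(c_0;c_1,c_2)=\frac1{120}(c_1+1)(c_2+1)(c_1+c_2+2)(2c_1+c_2+3)(3c_1+c_2+4)(3c_1+2c_2+5)$. They correspond bijectively to integer triples $(a_0;a_1,a_2)$ with $a_0+a_1+a_2=k+3$ (''$A_2$ labels'') via $\iota'(c_0;c_1,c_2)=(c_0;c_1,c_1+c_2+1)$, and then $\dim_{G_2}(c)=D(a_1,a_2)$. The $A_2$ simple current $J$ acts on $A_2$ labels by $J(a_0;a_1,a_2)=(a_2;a_0,a_1)$; on $G_2$ labels this is $J(c_0;c_1,c_2)=(c_1+c_2+1;c_0,c_1-c_0-1)$.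 *)

From Stdlib Require Import ZArith.
Open Scope Z_scope.

(* Formal G2 Weyl dimension in A2 labels. The product is always divisible
   by 120, so Z.div is exact division here. *)
Definition D (a1 a2 : Z) : Z :=
  ((a2 - a1) * (a2 + 1) * (2*a2 + a1 + 3) * (a2 + a1 + 2)
     * (a2 + 2*a1 + 3) * (a1 + 1)) / 120.

From Stdlib Require Import ZArith Lia List Setoid.
Open Scope Z_scope.

(** With [x = a1 + 1], [y = a2 + 1], [z = a0 + 1] and [K = x + y + z], the
    number [120 D(a1, a2)] is the product [P(x, y)] of the six positive roots
    of [G2] paired with the shifted weight.  The polynomial identity
    [P(x, y) - P(z, x) = K Q(x, y, K)] together with the congruence
    [gcd(K, 60) Q = 0 (mod 120)] gives
    [D(a1, a2) - D(a0, a1) = (K / gcd(K, 60)) (gcd(K, 60) Q / 120)].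
    Both [120 | P] and [120 | gcd(K, 60) Q] are polynomial congruences modulo
    [8], [3] and [5], checked on all residues. *)

Definition weyl_prod (x y : Z) : Z :=
  (y - x) * y * (2*y + x) * (x + y) * (y + 2*x) * x.

Definition weyl_rot_quot (x y K : Z) : Z :=
  2*x*K*K*K*K - 10*x*y*K*K*K + 20*x*y*y*K*K - 20*x*y*y*y*K + 10*x*y*y*y*y
  - 5*x*x*K*K*K + 20*x*x*y*K*K - 30*x*x*y*y*K + 20*x*x*y*y*y
  + 5*x*x*x*x*K - 10*x*x*x*x*y - 2*x*x*x*x*x.

Lemma weyl_prod_rotate (x y K : Z) :
  weyl_prod x y - weyl_prod (K - x - y) x = K * weyl_rot_quot x y K.
Proof. unfold weyl_prod, weyl_rot_quot; ring. Qed.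

Lemma D_weyl_prod (a1 a2 : Z) : D a1 a2 = weyl_prod (a1 + 1) (a2 + 1) / 120.
Proof. unfold D, weyl_prod; f_equal; ring. Qed.

Definition residues (m : Z) : list Z := map Z.of_nat (seq 0 (Z.to_nat m)).

Lemma forallb_residues (m : Z) (p : Z -> bool) (x : Z) :
  0 < m -> forallb p (residues m) = true -> p (x mod m) = true.
Proof.
  intros Hm Hp; rewrite forallb_forall in Hp; apply Hp, in_map_iff.
  pose proof (Z.mod_pos_bound x m Hm).
  exists (Z.to_nat (x mod m)); split; [lia | apply in_seq; lia].
Qed.

Section Congruences.

#[local] Existing Instance eqm_setoid.
#[local] Existing Instance Zplus_eqm.
#[local] Existing Instance Zminus_eqm.
#[local] Existing Instance Zmult_eqm.

Lemma weyl_prod_mod (m x y : Z) :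
  weyl_prod x y mod m = weyl_prod (x mod m) (y mod m) mod m.
Proof.
  change (eqm m (weyl_prod x y) (weyl_prod (x mod m) (y mod m))).
  assert (Hx : eqm m x (x mod m)) by (symmetry; apply Zmod_eqm).
  assert (Hy : eqm m y (y mod m)) by (symmetry; apply Zmod_eqm).
  unfold weyl_prod; rewrite <- Hx, <- Hy; reflexivity.
Qed.

Lemma weyl_rot_quot_mod (m x y K : Z) :
  weyl_rot_quot x y K mod m
  = weyl_rot_quot (x mod m) (y mod m) (K mod m) mod m.
Proof.
  change (eqm m (weyl_rot_quot x y K)
                (weyl_rot_quot (x mod m) (y mod m) (K mod m))).
  assert (Hx : eqm m x (x mod m)) by (symmetry; apply Zmod_eqm).
  assert (Hy : eqm m y (y mod m)) by (symmetry; apply Zmod_eqm).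
  assert (HK : eqm m K (K mod m)) by (symmetry; apply Zmod_eqm).
  unfold weyl_rot_quot; rewrite <- Hx, <- Hy, <- HK; reflexivity.
Qed.

End Congruences.

Lemma gcd_mod_divisor (K m d : Z) :
  0 < d -> (d | m) -> Z.gcd K d = Z.gcd (K mod m) d.
Proof.
  intros Hd Hdm.
  rewrite !(Z.gcd_comm _ d), <- (Z.gcd_mod K d), <- (Z.gcd_mod (K mod m) d)
    by lia.
  now rewrite Z.mod_mod_divide.
Qed.

Lemma divide_weyl_prod_of_residues (m x y : Z) : 0 < m ->
  forallb (fun a => forallb (fun b => weyl_prod a b mod m =? 0) (residues m))
    (residues m) = true ->
  (m | weyl_prod x y).
Proof.
  intros Hm Hcheck; apply Z.mod_divide; [lia |].
  rewrite weyl_prod_mod; apply Z.eqb_eq.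
  apply (forallb_residues m (fun b => weyl_prod (x mod m) b mod m =? 0));
    [exact Hm |].
  exact (forallb_residues m _ x Hm Hcheck).
Qed.

Lemma divide_gcd_weyl_rot_quot_of_residues (m d x y K : Z) :
  0 < m -> 0 < d -> (d | m) ->
  forallb (fun a => forallb (fun b => forallb (fun c =>
      (Z.gcd c d * weyl_rot_quot a b c) mod m =? 0)
    (residues m)) (residues m)) (residues m) = true ->
  (m | Z.gcd K d * weyl_rot_quot x y K).
Proof.
  intros Hm Hd Hdm Hcheck; apply Z.mod_divide; [lia |].
  rewrite (gcd_mod_divisor K m d Hd Hdm), Z.mul_mod, weyl_rot_quot_mod,
    <- Z.mul_mod by lia.
  apply Z.eqb_eq.
  apply (forallb_residues m (fun c =>
    (Z.gcd c d * weyl_rot_quot (x mod m) (y mod m) c) mod m =? 0)); [exact Hm |].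
  apply (forallb_residues m (fun b => forallb (fun c =>
    (Z.gcd c d * weyl_rot_quot (x mod m) b c) mod m =? 0) (residues m)));
    [exact Hm |].
  exact (forallb_residues m _ x Hm Hcheck).
Qed.

Lemma divide_120 (n : Z) : (8 | n) -> (3 | n) -> (5 | n) -> (120 | n).
Proof.
  intros [p Hp] [q Hq] [r Hr].
  exists (- p + q - r); lia.
Qed.

Lemma divide_120_weyl_prod (x y : Z) : (120 | weyl_prod x y).
Proof.
  apply divide_120; apply divide_weyl_prod_of_residues;
    solve [lia | vm_compute; reflexivity].
Qed.

Lemma divide_mul_gcd_weaken (K d e m n : Z) :
  (d | e) -> (m | Z.gcd K d * n) -> (m | Z.gcd K e * n).
Proof.
  intros Hde Hm; apply (Z.divide_trans _ _ _ Hm), Z.mul_divide_mono_r.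
  apply Z.gcd_greatest; [apply Z.gcd_divide_l |].
  exact (Z.divide_trans _ _ _ (Z.gcd_divide_r K d) Hde).
Qed.

Lemma divide_120_gcd_weyl_rot_quot (x y K : Z) :
  (120 | Z.gcd K 60 * weyl_rot_quot x y K).
Proof.
  apply divide_120.
  - apply (divide_mul_gcd_weaken K 4); [exists 15; lia |].
    apply divide_gcd_weyl_rot_quot_of_residues;
      solve [lia | exists 2; lia | vm_compute; reflexivity].
  - apply (divide_mul_gcd_weaken K 3); [exists 20; lia |].
    apply divide_gcd_weyl_rot_quot_of_residues;
      solve [lia | apply Z.divide_refl | vm_compute; reflexivity].
  - apply (divide_mul_gcd_weaken K 5); [exists 12; lia |].
    apply divide_gcd_weyl_rot_quot_of_residues;
      solve [lia | apply Z.divide_refl | vm_compute; reflexivity].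
Qed.

(* No sign condition on [K]: for [K = 0] the modulus is [0], [Z.modulo] by [0]
   is the identity, and the statement is the exact equality [P(x, y) = P(z, x)]. *)
Lemma weyl_prod_div_rotate_mod (x y K : Z) :
  let M := K / Z.gcd K 60 in
  (weyl_prod x y / 120) mod M = (weyl_prod (K - x - y) x / 120) mod M.
Proof.
  intros M.
  assert (Hg : Z.gcd K 60 <> 0) by (rewrite Z.gcd_eq_0; lia).
  destruct (Z.gcd_divide_l K 60) as [c HK].
  assert (HM : M = c) by (unfold M; rewrite HK at 1; apply Z.div_mul, Hg).
  destruct (divide_120_weyl_prod x y) as [A HA].
  destruct (divide_120_weyl_prod (K - x - y) x) as [B HB].
  destruct (divide_120_gcd_weyl_rot_quot x y K) as [t Ht].
  assert (Hdiff : A = B + t * c).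
  { apply (Z.mul_reg_r _ _ 120); [lia |].
    replace ((B + t * c) * 120) with (B * 120 + c * (t * 120)) by ring.
    rewrite <- HA, <- HB, <- Ht, Z.mul_assoc, <- HK.
    pose proof (weyl_prod_rotate x y K); lia. }
  rewrite HM, HA, HB, !Z.div_mul, Hdiff by lia.
  apply Z_mod_plus_full.
Qed.

Lemma D_rotate_mod (a0 a1 a2 : Z) :
  let K := a0 + a1 + a2 + 3 in
  let M := K / Z.gcd K 60 in
  D a1 a2 mod M = D a0 a1 mod M.
Proof.
  intros K M; rewrite !D_weyl_prod.
  replace (a0 + 1) with (K - (a1 + 1) - (a2 + 1)) by (unfold K; lia).
  apply weyl_prod_div_rotate_mod.
Qed.

Theorem theorem2 (k : Z) (hk : 0 <= k) (a0 a1 a2 : Z)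
  (hsum : a0 + a1 + a2 = k + 3) :
  let K := k + 6 in
  let M := K / Z.gcd K 60 in
  (D a1 a2 mod M = D a0 a1 mod M) /\ (D a0 a1 mod M = D a2 a0 mod M).
Proof.
  intros K M.
  assert (HK : K = a0 + a1 + a2 + 3) by (unfold K; lia).
  split; unfold M; rewrite HK.
  - apply D_rotate_mod.
  - replace (a0 + a1 + a2) with (a2 + a0 + a1) by lia.
    apply D_rotate_mod.
Qed.
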